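(* Let $A,B\in M_n(\mathbb{R}_+)$ be simultaneously triangularizable. Then their characteristic polynomial $P_{A,B}(z)$ is a product of $n$ linear factors, i.e. there exist $\alpha_i,\beta_i\ge 0$ ($i=1,\dots,n$) with $P_{A,B}(z)=\prod_{i=1}^n(1\oplus\alpha_i z_1\oplus\beta_i z_2)$ for all $z_1,z_2\ge0$.
   Context: Max algebra: $\mathbb{R}_+$ the nonnegative reals with $a\oplus b=\max\{a,b\}$ and ordinary multiplication; for matrices, $(AB)_{ij}=\max_k a_{ik}b_{kj}$ and $(A\oplus B)_{ij}=\max\{a_{ij},b_{ij}\}$. $GL_n(\mathbb{R}_+)$ is the set of matrices invertible under this product (the generalized permutation matrices); $A,B$ are simultaneously triangularizable if one $P\in GL_n(\mathbb{R}_+)$ makes both $P^{-1}AP$ and $P^{-1}BP$ upper triangular. The tropical determinant of $M=(m_{ij})$ is $\mathrm{tdet}(M)=\max_{\sigma\in S_n}\prod_{i=1}^n m_{i\sigma(i)}$. For $z=(z_1,z_2)$ with $z_1,z_2\ge0$, let $M(z)=I\oplus(z_1A)\oplus(z_2B)$, where $I$ is the identity matrix ($1$ on the diagonal, $0$ elsewhere); the characteristic polynomial of the pair is $P_{A,B}(z)=\mathrm{tdet}(M(z))$. *)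

From HB Require Import structures.
From mathcomp Require Import all_boot all_order all_algebra all_fingroup.
Set Implicit Arguments. Unset Strict Implicit. Unset Printing Implicit Defensive.
Import Order.TTheory GRing.Theory Num.Theory.
Local Open Scope ring_scope.

Section MaxAlgebra.
Variable R : realFieldType.
Variable n : nat.

Definition nonneg_mx (A : 'M[R]_n) : Prop := forall i j, 0 <= A i j.

(* max-algebra product: (AB)_ij = max_k a_ik b_kj  (0 is neutral for max on R_+) *)
Definition maxmul (A B : 'M[R]_n) : 'M[R]_n :=
  \matrix_(i, j) \big[Num.max/0]_(k < n) (A i k * B k j).

Definition maxadd (A B : 'M[R]_n) : 'M[R]_n :=
  \matrix_(i, j) Num.max (A i j) (B i j).

Definition maxid : 'M[R]_n := \matrix_(i, j) (i == j)%:R.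

Definition upper_tri (A : 'M[R]_n) : Prop := forall i j : 'I_n, (j < i)%N -> A i j = 0.

Definition max_inverse (P Q : 'M[R]_n) : Prop :=
  nonneg_mx P /\ nonneg_mx Q /\ maxmul P Q = maxid /\ maxmul Q P = maxid.

Definition sim_triangularizable (A B : 'M[R]_n) : Prop :=
  exists P Pinv : 'M[R]_n, max_inverse P Pinv /\
    upper_tri (maxmul (maxmul Pinv A) P) /\ upper_tri (maxmul (maxmul Pinv B) P).

Definition tdet (M : 'M[R]_n) : R :=
  \big[Num.max/0]_(s : 'S_n) \prod_(i < n) M i (s i).

Definition charM (A B : 'M[R]_n) (z1 z2 : R) : 'M[R]_n :=
  maxadd (maxadd maxid (z1 *: A)) (z2 *: B).

Definition charpoly2 (A B : 'M[R]_n) (z1 z2 : R) : R := tdet (charM A B z1 z2).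

End MaxAlgebra.

(** In the max algebra an invertible matrix is monomial.  If [P Q = Q P = I],
    each diagonal entry 1 of [Q P] is attained by some product
    [Q j (pivot j) * P (pivot j) j = 1], and the zero off-diagonal entries of
    [P Q] and [Q P] force every other entry of row [j] of [Q] and of column [j]
    of [P] to vanish and [pivot] to be injective.  Hence [Q X P] is [X]
    relabelled by [pivot] and rescaled to [d i^-1 * X (pivot i) (pivot j) * d j]
    with [d j = P (pivot j) j > 0].  Such a monomial similarity preserves the
    tropical determinant and commutes with forming [M(z) = I (+) z1 A (+) z2 B],
    so [P_{A,B}(z)] is the tropical determinant of an upper triangular matrix
    with diagonal [1 (+) z1 (Q A P) i i (+) z2 (Q B P) i i], which is the
    product of that diagonal. *)
From mathcomp Require Import all_boot all_order all_algebra all_fingroup.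
From mathcomp Require Import ring.
Set Implicit Arguments. Unset Strict Implicit. Unset Printing Implicit Defensive.
Import Order.TTheory GRing.Theory Num.Theory.
Local Open Scope ring_scope.

Lemma perm_neq1_descent n (s : 'S_n) : s != 1%g -> exists i : 'I_n, (s i < i)%N.
Proof.
move=> s_neq1; apply/existsP; apply: contraR s_neq1; rewrite negb_exists => /forallP.
move=> no_descent; have le_s (i : 'I_n) : (i <= s i)%N by rewrite leqNgt no_descent.
have [_] := leqif_sum (P := predT) (fun i _ => leqif_eq (le_s i)).
rewrite [X in X == _](reindex_inj (@perm_inj _ s)) eqxx => /esym/forallP s_id.
by apply/eqP/permP => i; rewrite perm1; apply/val_inj/esym/eqP/s_id.
Qed.

Lemma bigmax_eq_single (R : realDomainType) (I : finType) (F : I -> R) k0 :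
  (forall k, k != k0 -> F k = 0) -> 0 <= F k0 -> \big[Num.max/0]_k F k = F k0.
Proof.
move=> F_off F_ge0.
by rewrite (bigmaxD1 k0) // bigmax_eq_id ?max_l // => k /F_off->.
Qed.

Section MaxAlgebra.
Variables (R : realFieldType) (n : nat).
Implicit Types (M X Y : 'M[R]_n) (i j k : 'I_n).

Lemma maxmulE X Y i j : maxmul X Y i j = \big[Num.max/0]_k (X i k * Y k j).
Proof. by rewrite mxE. Qed.

Lemma maxidE i j : maxid R n i j = (i == j)%:R.
Proof. by rewrite mxE. Qed.

Lemma charME (A B : 'M[R]_n) z1 z2 i j :
  charM A B z1 z2 i j = Num.max (Num.max (i == j)%:R (z1 * A i j)) (z2 * B i j).
Proof. by rewrite !mxE. Qed.

Lemma maxmul_nonneg X Y : nonneg_mx (maxmul X Y).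
Proof. by move=> i j; rewrite maxmulE bigmax_ge_id. Qed.

Lemma maxmul_id_offdiag X Y : nonneg_mx X -> nonneg_mx Y -> maxmul X Y = maxid R n ->
  forall i j k, i != j -> X i k * Y k j = 0.
Proof.
move=> X_ge0 Y_ge0 XY1 i j k ij; apply/le_anti; rewrite mulr_ge0 // andbT.
have : maxmul X Y i j = 0 by rewrite XY1 maxidE (negPf ij).
by rewrite maxmulE => <-; apply: le_bigmax.
Qed.

Definition monomial_conj (f : 'I_n -> 'I_n) (d : 'I_n -> R) M : 'M[R]_n :=
  \matrix_(i, j) ((d i)^-1 * M (f i) (f j) * d j).

Lemma tdet_monomial_conj f d M : injective f -> (forall i, d i != 0) ->
  tdet (monomial_conj f d M) = tdet M.
Proof.
move=> f_inj d_neq0; rewrite /tdet [RHS](reindex_inj (conjg_inj (perm f_inj))).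
apply: eq_bigr => s _; rewrite [RHS](reindex_inj f_inj).
transitivity (\prod_i ((d i)^-1 * d (s i)) * \prod_i M (f i) (f (s i))).
  by rewrite -big_split; apply: eq_bigr => i _; rewrite mxE mulrAC.
have d_perm : \prod_i d (s i) = \prod_i d i by rewrite [RHS](reindex_inj (@perm_inj _ s)).
have d_prod_neq0 : \prod_i d i != 0 by apply/prodf_neq0 => i _.
rewrite big_split /= prodfV d_perm mulVf // mul1r.
by apply: eq_bigr => i _; rewrite -!(permE f_inj) permJ.
Qed.

Lemma tdet_upper_tri M : upper_tri M -> (forall i, 0 <= M i i) ->
  tdet M = \prod_i M i i.
Proof.
move=> M_tri diag_ge0; rewrite /tdet (bigmax_eq_single (k0 := 1%g)) => [|s|].
- by apply: eq_bigr => i _; rewrite perm1.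
- by case/perm_neq1_descent => i lt_si; rewrite (bigD1 i) //= M_tri ?mul0r.
- by rewrite prodr_ge0 // => i _; rewrite perm1.
Qed.

Lemma charM_monomial_conj f d (A B : 'M[R]_n) z1 z2 :
  injective f -> (forall i, 0 < d i) ->
  charM (monomial_conj f d A) (monomial_conj f d B) z1 z2 =
  monomial_conj f d (charM A B z1 z2).
Proof.
move=> f_inj d_gt0; apply/matrixP => i j; rewrite !charME !mxE.
have c_ge0 : 0 <= (d i)^-1 * d j by rewrite mulr_ge0 ?invr_ge0 ?ltW.
have id_conj : (i == j)%:R = (d i)^-1 * (f i == f j)%:R * d j.
  rewrite (inj_eq f_inj); case: eqVneq => [->|_]; last by rewrite !mulr0 mul0r.
  by rewrite mulr1 mulVf // lt0r_neq0.
rewrite [RHS]mulrAC !maxr_pMr // id_conj; congr (Num.max (Num.max _ _) _); ring.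
Qed.

Section MaxInverse.
Variables P Q : 'M[R]_n.
Hypotheses (P_ge0 : nonneg_mx P) (Q_ge0 : nonneg_mx Q).
Hypotheses (PQ1 : maxmul P Q = maxid R n) (QP1 : maxmul Q P = maxid R n).

Definition pivot j := [arg max_(k > j) (Q j k * P k j)]%O.

Lemma pivotP j : Q j (pivot j) * P (pivot j) j = 1.
Proof.
have := maxidE j j; rewrite eqxx -QP1 maxmulE (bigmax_eq_arg 0 j) // => k _.
exact: mulr_ge0.
Qed.

Lemma pivot_neq0 j : Q j (pivot j) != 0 /\ P (pivot j) j != 0.
Proof. by apply/andP; rewrite -negb_or -mulf_eq0 pivotP oner_neq0. Qed.

Lemma Q_pivot_gt0 j : 0 < Q j (pivot j).
Proof. by rewrite lt0r (pivot_neq0 j).1 Q_ge0. Qed.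

Lemma P_pivot_gt0 j : 0 < P (pivot j) j.
Proof. by rewrite lt0r (pivot_neq0 j).2 P_ge0. Qed.

Lemma Q_pivot j : Q j (pivot j) = (P (pivot j) j)^-1.
Proof. by rewrite -(mulr1_eq (pivotP j)) invrK. Qed.

Lemma Q_offpivot i k : k != pivot i -> Q i k = 0.
Proof.
rewrite eq_sym => ik; have /eqP := maxmul_id_offdiag P_ge0 Q_ge0 PQ1 i ik.
by rewrite mulf_eq0 (gt_eqF (P_pivot_gt0 i)) => /eqP.
Qed.

Lemma P_offpivot l j : l != pivot j -> P l j = 0.
Proof.
move=> lj; have /eqP := maxmul_id_offdiag P_ge0 Q_ge0 PQ1 j lj.
by rewrite mulf_eq0 (gt_eqF (Q_pivot_gt0 j)) orbF => /eqP.
Qed.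

Lemma pivot_inj : injective pivot.
Proof.
move=> i j pij; apply/eqP; apply: contraT => ij.
have /eqP := maxmul_id_offdiag Q_ge0 P_ge0 QP1 (pivot i) ij.
by rewrite mulf_eq0 (gt_eqF (Q_pivot_gt0 i)) pij (gt_eqF (P_pivot_gt0 j)).
Qed.

Lemma maxmul_inverse_conj X : nonneg_mx X ->
  maxmul (maxmul Q X) P = monomial_conj pivot (fun j => P (pivot j) j) X.
Proof.
move=> X_ge0; have QX i l : maxmul Q X i l = Q i (pivot i) * X (pivot i) l.
  rewrite maxmulE (bigmax_eq_single (k0 := pivot i)) // => [k /Q_offpivot->|].
    by rewrite mul0r.
  by rewrite mulr_ge0 // ltW // Q_pivot_gt0.
apply/matrixP => i j; rewrite maxmulE (bigmax_eq_single (k0 := pivot j)).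
- by rewrite QX Q_pivot mxE.
- by move=> k /P_offpivot->; rewrite mulr0.
- by rewrite QX !mulr_ge0 // ltW // Q_pivot_gt0.
Qed.

End MaxInverse.
End MaxAlgebra.

Theorem theorem3p20 (R : realFieldType) (n : nat) (A B : 'M[R]_n) :
  nonneg_mx A -> nonneg_mx B -> sim_triangularizable A B ->
  exists alpha beta : 'I_n -> R,
    (forall i, 0 <= alpha i) /\ (forall i, 0 <= beta i) /\
    forall z1 z2 : R, 0 <= z1 -> 0 <= z2 ->
      charpoly2 A B z1 z2 =
      \prod_(i < n) Num.max 1 (Num.max (alpha i * z1) (beta i * z2)).
Proof.
move=> A_ge0 B_ge0 [P [Q [[P_ge0 [Q_ge0 [PQ1 QP1]]] [A_tri B_tri]]]].
set A' := maxmul (maxmul Q A) P; set B' := maxmul (maxmul Q B) P.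
exists (fun i => A' i i), (fun i => B' i i).
do 2![split; first by move=> i; apply: maxmul_nonneg].
(* The signs of z1, z2 do not matter: the diagonal of M(z) is at least 1. *)
move=> z1 z2 _ _.
have piv_inj : injective (pivot P Q) by exact: pivot_inj.
have d_gt0 j : 0 < P (pivot P Q j) j by exact: P_pivot_gt0.
rewrite /charpoly2 -(tdet_monomial_conj _ piv_inj (fun j => lt0r_neq0 (d_gt0 j))).
rewrite -charM_monomial_conj // -!maxmul_inverse_conj //.
rewrite tdet_upper_tri => [|i j ji|i].
- by apply: eq_bigr => i _; rewrite charME eqxx maxA mulrC (mulrC z2).
- have /negPf ij : i != j by rewrite neq_ltn ji orbT.
  by rewrite charME A_tri // B_tri // ij !mulr0 !maxxx.
- by rewrite charME eqxx !le_max ler01.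
Qed.
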